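(* Let $T$ be a tree rooted at $r$ with vertex set $V$. Let $V_1,V_2\subseteq V$ with $V_1\cap V_2=\emptyset$ and $|V_1|=|V_2|$, such that $V_1$ (resp. $V_2$) induces in $T$ a collection $\mathcal{P}_1$ (resp. $\mathcal{P}_2$) of vertex-disjoint paths, and suppose there is a bijection $\mathcal{P}_1\to\mathcal{P}_2$ mapping each path that starts at a vertex $v$ to a path of the same length that starts at a sibling of $v$. If every two distinct paths in $\mathcal{P}_1\cup\mathcal{P}_2$ are independent, then $V_1$ and $V_2$ are homometric sets of $T$.
   Context: Here a path in $\mathcal{P}_1\cup\mathcal{P}_2$ ''starts at'' the vertex of the path closest to the root (each such path runs downward from that vertex toward the leaves), and siblings are distinct vertices with the same parent. Two paths $P_1,P_2$ in $T$ are independent if there is no root-to-leaf path in $T$ that shares a vertex with both $P_1$ and $P_2$. The profile of a vertex set $V'$ is the multiset of distances in $T$ over all unordered pairs of distinct vertices of $V'$; two disjoint vertex sets are homometric if their profiles are equal. *)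

From mathcomp Require Import all_boot.
Set Implicit Arguments. Unset Strict Implicit. Unset Printing Implicit Defensive.

Section Tree.
Variables (T : finType) (e : rel T).

Definition is_tree : Prop :=
  [/\ symmetric e, irreflexive e,
      (forall x y : T, connect e x y) &
      (forall c : seq T, ucycle e c -> size c <= 2)].

Definition walk_len (n : nat) (x y : T) : bool :=
  [exists p : n.-tuple T, path e x p && (last x p == y)].

(* graph distance: least n with a walk of length n (always < #|T| when connected) *)
Definition dist (x y : T) : nat :=
  index true [seq walk_len n x y | n <- iota 0 #|T|].

Variable r : T.

Definition depth (x : T) : nat := dist r x.

Definition child : rel T := fun a b => e a b && (depth b == (depth a).+1).

Definition leaf (x : T) : bool := [forall y, ~~ child x y].

Definition siblings (u v : T) : Prop :=
  u != v /\ exists w, [/\ child w u & child w v].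

(* the vertex set of a root-to-leaf path, given as r :: s *)
Definition root_leaf_path (s : seq T) : bool :=
  path child r s && leaf (last r s).

Definition independent (P Q : {set T}) : Prop :=
  ~ exists s, [/\ root_leaf_path s, has (mem P) (r :: s) & has (mem Q) (r :: s)].

Definition induced (V' : {set T}) : rel T :=
  fun a b => [&& a \in V', b \in V' & e a b].

Definition comp (V' : {set T}) (x : T) : {set T} :=
  [set y | connect (induced V') x y].

Definition components (V' : {set T}) : {set {set T}} :=
  [set comp V' x | x in V'].

Definition induces_downward_paths (V' : {set T}) : Prop :=
  forall C, C \in components V' ->
    exists x0 p, C = [set:: x0 :: p] /\ path child x0 p.

Definition starts_at (C : {set T}) (u : T) : Prop :=
  u \in C /\ forall y, y \in C -> depth u <= depth y.

(* profile as a counting function: number of unordered pairs {x,y}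
   of distinct vertices of V' at distance d *)
Definition profile (V' : {set T}) (d : nat) : nat :=
  #|[set S in powerset V' | (#|S| == 2) &&
      [exists x in S, exists y in S, (x != y) && (dist x y == d)]]|.

Definition homometric (V1 V2 : {set T}) : Prop :=
  [disjoint V1 & V2] /\ forall d, profile V1 d = profile V2 d.

End Tree.

From Pilot Require Import Defs.
From mathcomp Require Import all_boot zify.
Set Implicit Arguments. Unset Strict Implicit. Unset Printing Implicit Defensive.

(* Send each vertex x of a path C of P1 to the vertex of f(C) at the depth of
   x. Inside one path, distances are depth differences. For x and y on distinct
   paths with top vertices u and u' and parents w and w', independence says that
   y lies outside the subtree of u and w outside the subtree of u', so every walk
   from x to y leaves through the edge u w and
     d(x, y) = (depth x - depth u) + (depth y - depth u') + 2 + d(w, w').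
   The images of x and y lie on paths whose tops are siblings of u and u', i.e.
   have the same depths and parents, so the map is a distance-preserving
   bijection V1 -> V2, and such a bijection preserves profiles. *)

Section Distance.
Variables (T : finType) (e : rel T).
Hypotheses (e_sym : symmetric e) (e_conn : forall x y, connect e x y).

Lemma walk_lenP n x y :
  reflect (exists p, [/\ size p = n, path e x p & last x p = y]) (walk_len e n x y).
Proof.
apply: (iffP existsP) => [[t /andP [pt /eqP ly]] | [p [sp pp lp]]].
  by exists (val t); rewrite size_tuple.
have sp' : size p == n by apply/eqP.
by exists (Tuple sp'); rewrite /= pp lp eqxx.
Qed.

Lemma walk_len0 x y : walk_len e 0 x y = (x == y).
Proof.
apply/walk_lenP/eqP => [[[|? ?] [] //= _ _ ->] | ->] //.
by exists [::].
Qed.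

Lemma walk_len1 x y : e x y -> walk_len e 1 x y.
Proof. by move=> exy; apply/walk_lenP; exists [:: y]; rewrite /= exy. Qed.

Lemma walk_len_cat m n x y z :
  walk_len e m x y -> walk_len e n y z -> walk_len e (m + n) x z.
Proof.
move=> /walk_lenP [p [sp pp lp]] /walk_lenP [q [sq pq lq]].
apply/walk_lenP; exists (p ++ q).
by rewrite size_cat cat_path last_cat lp pp pq sp sq.
Qed.

Lemma walk_len_sym n x y : walk_len e n x y -> walk_len e n y x.
Proof.
move=> /walk_lenP [p [sp pp lp]]; apply/walk_lenP.
exists (rev (belast x p)); split.
- by rewrite size_rev size_belast.
- by rewrite -lp rev_path; apply: sub_path pp => a b; rewrite e_sym.
- case: p sp pp lp => [|a p] _ _ /= lp; first by rewrite lp.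
  by rewrite rev_cons last_rcons.
Qed.

Lemma exists_short_walk x y : exists2 n, n < #|T| & walk_len e n x y.
Proof.
have /connectP [p pp lp] := e_conn x y.
case/shortenP: pp lp => p' pp' up' _ lp'.
exists (size p'); last by apply/walk_lenP; exists p'.
by have := max_card (mem (x :: p')); rewrite (card_uniqP up').
Qed.

Lemma mem_walks x y : true \in [seq walk_len e n x y | n <- iota 0 #|T|].
Proof.
have [n ltn wn] := exists_short_walk x y.
by apply/mapP; exists n; rewrite ?mem_iota ?wn.
Qed.

Lemma dist_lt x y : dist e x y < #|T|.
Proof.
rewrite /dist -[X in _ < X](size_iota 0).
by rewrite -(size_map (fun n => walk_len e n x y)) index_mem mem_walks.
Qed.

Lemma walk_dist x y : walk_len e (dist e x y) x y.
Proof.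
have lt_dist := dist_lt x y; rewrite /dist in lt_dist *.
by have := nth_index false (mem_walks x y); rewrite (nth_map 0) ?nth_iota ?size_iota.
Qed.

Lemma dist_min n x y : walk_len e n x y -> dist e x y <= n.
Proof.
move=> w; have [lt_n|] := ltnP n #|T|; last exact: leq_trans (ltnW (dist_lt x y)).
rewrite leqNgt; apply/negP => lt_dist.
have := before_find (a := pred1 true) false lt_dist.
by rewrite (nth_map 0) ?size_iota // nth_iota //= w.
Qed.

Lemma dist_sym x y : dist e x y = dist e y x.
Proof. by apply/eqP; rewrite eqn_leq !dist_min // walk_len_sym // walk_dist. Qed.

Lemma dist_triangle x y z : dist e x z <= dist e x y + dist e y z.
Proof. by apply: dist_min; apply: walk_len_cat; apply: walk_dist. Qed.

Lemma dist_eq0 x y : (dist e x y == 0) = (x == y).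
Proof.
apply/eqP/eqP => [d0 | ->]; last by apply/eqP; rewrite -leqn0 dist_min ?walk_len0.
by apply/eqP; rewrite -walk_len0 -d0 walk_dist.
Qed.

Lemma dist_edge x y : e x y -> dist e x y <= 1.
Proof. by move=> exy; apply: dist_min; apply: walk_len1. Qed.

End Distance.

Section Profile.
Variables (T : finType) (e : rel T) (V1 V2 : {set T}) (phi : T -> T).
Hypotheses (phi_inj : {in V1 &, injective phi}) (phi_V1 : phi @: V1 = V2)
  (phi_dist : {in V1 &, forall x y, dist e (phi x) (phi y) = dist e x y}).

Lemma imset_in_inj (S S' : {set T}) :
  S \subset V1 -> S' \subset V1 -> phi @: S = phi @: S' -> S = S'.
Proof.
suff sub (A B : {set T}) :
    A \subset V1 -> B \subset V1 -> phi @: A = phi @: B -> A \subset B.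
  move=> sS sS' eqS; apply/eqP; rewrite eqEsubset.
  by rewrite (sub _ _ sS sS' eqS) (sub _ _ sS' sS (esym eqS)).
move=> sA sB eqAB; apply/subsetP => x xA.
have /imsetP [y yB eqxy] : phi x \in phi @: B by rewrite -eqAB imset_f.
by rewrite (phi_inj (subsetP sA x xA) (subsetP sB y yB) eqxy).
Qed.

Lemma imset_preimset (S : {set T}) : S \subset V2 -> phi @: (V1 :&: phi @^-1: S) = S.
Proof.
move=> sSV2; apply/setP => y; apply/imsetP/idP => [[x] | yS].
  by rewrite !inE => /andP [_ ?] ->.
have /imsetP [x xV1 yx] : y \in phi @: V1 by rewrite phi_V1 (subsetP sSV2).
by exists x => //; rewrite !inE xV1 -yx.
Qed.

Lemma exists_pair_dist_imset d (S : {set T}) : S \subset V1 ->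
  [exists x in phi @: S, exists y in phi @: S, (x != y) && (dist e x y == d)] =
  [exists x in S, exists y in S, (x != y) && (dist e x y == d)].
Proof.
move=> sSV1; have V1S := subsetP sSV1.
have phi_pair x y : x \in S -> y \in S ->
    (phi x != phi y) && (dist e (phi x) (phi y) == d) = (x != y) && (dist e x y == d).
  move=> xS yS; rewrite phi_dist ?V1S //; congr (~~ _ && _).
  by apply/eqP/eqP => [/phi_inj -> | ->] //; apply: V1S.
apply/existsP/existsP => [[_ /andP [/imsetP [x xS ->]]] | [x /andP [xS]]].
  move=> /existsP [_ /andP [/imsetP [y yS ->]]]; rewrite phi_pair // => pxy.
  by exists x; rewrite xS; apply/existsP; exists y; rewrite yS.
move=> /existsP [y /andP [yS pxy]]; exists (phi x); rewrite imset_f //.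
by apply/existsP; exists (phi y); rewrite imset_f // phi_pair.
Qed.

Lemma profile_isometry d : profile e V1 d = profile e V2 d.
Proof.
pose pairs (V : {set T}) := [set S in powerset V | (#|S| == 2) &&
      [exists x in S, exists y in S, (x != y) && (dist e x y == d)]].
change (#|pairs V1| = #|pairs V2|).
have mem_pairs_imset (S : {set T}) :
    S \subset V1 -> (phi @: S \in pairs V2) = (S \in pairs V1).
  move=> sSV1; have injS := sub_in2 (subsetP sSV1) phi_inj.
  by rewrite !inE -phi_V1 imsetS // sSV1 card_in_imset // exists_pair_dist_imset.
have sub_pairs (V S : {set T}) : S \in pairs V -> S \subset V by rewrite !inE => /andP [].
have -> : pairs V2 = [set phi @: S | S : {set T} in pairs V1].
  apply/setP => S; apply/idP/imsetP => [S2 | [S1 S1P ->]]; last first.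
    by rewrite mem_pairs_imset // (sub_pairs V1).
  have S2_sub := sub_pairs _ _ S2.
  exists (V1 :&: phi @^-1: S); last by rewrite imset_preimset.
  by rewrite -mem_pairs_imset ?subsetIl // imset_preimset.
rewrite card_in_imset // => S S' /sub_pairs sS /sub_pairs sS'.
exact: imset_in_inj.
Qed.

End Profile.

Section Components.
Variables (T : finType) (e : rel T).

Lemma components_sub (V C : {set T}) : C \in components e V -> C \subset V.
Proof.
case/imsetP => x xV ->; apply/subsetP => y; rewrite inE => /connectP [p pp ->].
case/lastP: p pp => [|q z] //= pp.
by rewrite last_rcons; move: pp; rewrite rcons_path => /andP [_ /and3P [_]].
Qed.

Lemma mem_comp (V : {set T}) x : x \in Defs.comp e V x.
Proof. by rewrite inE connect0. Qed.

End Components.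

Section Tree.
Variables (T : finType) (e : rel T) (r : T).
Hypothesis tree : is_tree e.

Let e_sym : symmetric e. Proof. by case: tree. Qed.
Let e_irr : irreflexive e. Proof. by case: tree. Qed.
Let e_conn : forall x y, connect e x y. Proof. by case: tree. Qed.
Let e_acyc : forall c : seq T, ucycle e c -> size c <= 2. Proof. by case: tree. Qed.

Local Notation dp := (depth e r).
Local Notation ch := (child e r).
Local Notation descendant := (connect (child e r)).

Lemma depth_root : dp r = 0.
Proof. by apply/eqP; rewrite dist_eq0. Qed.

Lemma depth_eq0 x : dp x = 0 -> x = r.
Proof. by move/eqP; rewrite dist_eq0 // eq_sym => /eqP. Qed.

Lemma depth_child w u : ch w u -> dp u = (dp w).+1.
Proof. by case/andP => _ /eqP. Qed.

Lemma depth_edge_le a b : e a b -> dp b <= (dp a).+1.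
Proof.
move=> eab; rewrite -addn1; apply: leq_trans (dist_triangle e_conn r a b) _.
by rewrite leq_add2l dist_edge.
Qed.

Lemma exists_parent x : x != r -> exists p, ch p x.
Proof.
move=> xr; have /walk_lenP [p [sp pp lp]] := walk_dist e_conn r x; rewrite -/(dp x) in sp.
case/lastP: p sp pp lp => [|q z] sp pp lp; first by rewrite -lp eqxx in xr.
rewrite last_rcons in lp; subst z; rewrite rcons_path in pp; case/andP: pp => pq ex.
exists (last r q); rewrite /child ex eqn_leq depth_edge_le //= -sp size_rcons ltnS.
by apply: dist_min => //; apply/walk_lenP; exists q.
Qed.

(* Lifting both ends to their parents either closes a cycle through a common
   parent or yields the same configuration one level up. *)
Lemma no_path_above_depth k : forall b c s, dp b = k -> dp c = k -> b != c ->
  path e b s -> last b s = c -> uniq (b :: s) -> all (fun z => k <= dp z) s -> False.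
Proof.
elim: k => [|k IH] b c s db dc bc pbs lbs ubs als.
  by move: bc; rewrite (depth_eq0 db) (depth_eq0 dc) eqxx.
have [b' /andP [eb' /eqP db']] : exists b', ch b' b.
  by apply: exists_parent; apply/eqP => br; move: db; rewrite br depth_root.
have [c' /andP [ec' /eqP dc']] : exists c', ch c' c.
  by apply: exists_parent; apply/eqP => cr; move: dc; rewrite cr depth_root.
have {}db' : dp b' = k by move: db; rewrite db' => -[].
have {}dc' : dp c' = k by move: dc; rewrite dc' => -[].
have deep z : z \in s -> k < dp z by move=> zs; exact: (allP als z zs).
have b'b : b' != b by apply/eqP => h; move: db; rewrite -h db'; lia.
have b's : b' \notin s by apply/negP => /deep; rewrite db' ltnn.
have c's : c' \notin s by apply/negP => /deep; rewrite dc' ltnn.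
have bc' : b != c' by apply/eqP => h; move: db; rewrite h dc'; lia.
move: ubs; rewrite cons_uniq => /andP [bs us].
have [eq_bc' | ne_bc'] := eqVneq b' c'.
  subst c'; have /e_acyc : ucycle e (b' :: b :: s).
    rewrite /ucycle /= rcons_path eb' pbs lbs e_sym ec' /=.
    by rewrite in_cons negb_or b'b b's bs us.
  by case: s {pbs als deep b's c's bs us} lbs => [|x s] //= lbs; rewrite lbs eqxx in bc.
apply: (IH b' c' (b :: rcons s c')) => //=.
- by rewrite eb' rcons_path pbs lbs e_sym ec'.
- by rewrite last_rcons.
- rewrite in_cons mem_rcons in_cons negb_or b'b /= negb_or ne_bc' b's /=.
  by rewrite mem_rcons in_cons negb_or bc' bs rcons_uniq c's us.
- rewrite db leqnSn all_rcons dc' leqnn /=.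
  by apply/allP => z /deep /ltnW.
Qed.

Lemma depth_edge_neq a b : e a b -> dp a != dp b.
Proof.
move=> eab; apply/negP => /eqP dab.
have ab : a != b by apply: contraTneq eab => ->; rewrite e_irr.
apply: (no_path_above_depth (b := a) (c := b) (s := [:: b])) => //=.
- by rewrite eab.
- by rewrite in_cons orbF ab.
- by rewrite dab leqnn.
Qed.

Lemma parent_uniq a b c : ch b a -> ch c a -> b = c.
Proof.
move=> /andP [eba /eqP dab] /andP [eca /eqP dac]; apply/eqP/negP => /negP bc.
apply: (no_path_above_depth (b := b) (c := c) (s := [:: a; c])) => //=.
- by apply: succn_inj; rewrite -dab -dac.
- by rewrite eba e_sym eca.
- rewrite !in_cons !orbF negb_or bc !andbT; apply/andP; split.
    by apply/eqP => h; move: dab; rewrite h; lia.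
  by apply/eqP => h; move: dac; rewrite h; lia.
- rewrite dab leqnSn /=; lia.
Qed.

Lemma edge_child a b : e a b -> ch a b || ch b a.
Proof.
move=> eab; rewrite /child eab -(e_sym a b) eab /=.
have := depth_edge_le eab; have := depth_edge_le (etrans (e_sym b a) eab).
have := depth_edge_neq eab; lia.
Qed.

Lemma descendant_last u a : descendant u a -> a != u ->
  exists2 a', descendant u a' & ch a' a.
Proof.
move=> /connectP [p pp lp] au.
case/lastP: p pp lp => [|q z] pp lp; first by rewrite lp eqxx in au.
rewrite last_rcons in lp; subst z; rewrite rcons_path in pp; case/andP: pp => pq cq.
by exists (last u q) => //; apply/connectP; exists q.
Qed.

Lemma edge_leaving_subtree u a b : e a b -> descendant u a -> ~~ descendant u b ->
  a = u /\ ch b u.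
Proof.
move=> eab dua ndub; have /orP [cab | cba] := edge_child eab.
  by rewrite (connect_trans dua (connect1 cab)) in ndub.
have au : a = u.
  have [// | neq_au] := eqVneq a u; have [a' dua' ca'a] := descendant_last dua neq_au.
  by rewrite -(parent_uniq ca'a cba) dua' in ndub.
by rewrite -au.
Qed.

Lemma path_leaving_subtree u w x p : ch w u -> path e x p -> descendant u x ->
  ~~ descendant u (last x p) -> exists q1 q2, p = q1 ++ w :: q2 /\ last x q1 = u.
Proof.
move=> cwu; elim: p x => [|z p IH] x /=; first by move=> _ ->.
case/andP => exz pzp dux ndu.
have [duz | nduz] := boolP (descendant u z).
  have [q1 [q2 [-> lq]]] := IH z pzp duz ndu.
  by exists (z :: q1), q2.
have [xu czu] := edge_leaving_subtree exz dux nduz; subst x.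
by exists [::], p; rewrite (parent_uniq czu cwu).
Qed.

Lemma dist_leaving_subtree u w x y : ch w u -> descendant u x -> ~~ descendant u y ->
  dist e x y = dist e x u + (dist e w y).+1.
Proof.
move=> cwu dux nduy; apply/eqP; rewrite eqn_leq; apply/andP; split.
  apply: leq_trans (dist_triangle e_conn x u y) _; rewrite leq_add2l -add1n.
  apply: leq_trans (dist_triangle e_conn u w y) _.
  by rewrite leq_add2r dist_edge // e_sym; case/andP: cwu.
have /walk_lenP [p [sp pp lp]] := walk_dist e_conn x y.
rewrite -lp in nduy; have [q1 [q2 [pq lq]]] := path_leaving_subtree cwu pp dux nduy.
move: pp; rewrite pq cat_path lq /= => /and3P [pq1 _ pq2].
have h1 : dist e x u <= size q1 by apply: dist_min => //; apply/walk_lenP; exists q1.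
have h2 : dist e w y <= size q2.
  by apply: dist_min => //; apply/walk_lenP; exists q2; rewrite -lp pq last_cat lq.
rewrite -sp pq size_cat /=; lia.
Qed.

Lemma depth_path_child a p : path ch a p -> dp (last a p) = dp a + size p.
Proof.
elim: p a => [|z p IH] a /=; first by rewrite addn0.
by case/andP => /depth_child dz /IH ->; rewrite dz addnS.
Qed.

Lemma depth_descendant a b : descendant a b -> dp b = dp a + dist e a b.
Proof.
case/connectP => p pp ->; rewrite depth_path_child //.
have h1 : dist e a (last a p) <= size p.
  apply: dist_min => //; apply/walk_lenP; exists p; split => //.
  by apply: sub_path pp => x y /andP [].
have h2 := dist_triangle e_conn r a (last a p); rewrite -/(dp a) -/(dp (last a p)) in h2.
rewrite depth_path_child // in h2; congr (_ + _); apply/eqP; rewrite eqn_leq h1 /=; lia.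
Qed.

Lemma descendant_depth_le a b : descendant a b -> dp a <= dp b.
Proof. by move/depth_descendant ->; rewrite leq_addr. Qed.

Lemma descendant_depth_eq a b : descendant a b -> dp a = dp b -> a = b.
Proof.
move/depth_descendant => -> /eqP; rewrite -{1}[dp a]addn0 eqn_add2l eq_sym dist_eq0 //.
by move/eqP.
Qed.

Lemma path_child_depth_lt x p : path ch x p -> {in p, forall z, dp x < dp z}.
Proof.
elim: p x => [|a p IH] x //= /andP [/depth_child da pp] z.
rewrite in_cons => /predU1P [-> | zp]; first by rewrite da.
by apply: ltn_trans (IH _ pp _ zp); rewrite da.
Qed.

Lemma path_child_uniq x p : path ch x p -> uniq (x :: p).
Proof.
elim: p x => [|a p IH] x // /andP [cxa pp].
have lt_x : {in a :: p, forall z, dp x < dp z}.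
  by apply: path_child_depth_lt; rewrite /= cxa.
by rewrite cons_uniq IH // andbT; apply/negP => /lt_x; rewrite ltnn.
Qed.

Lemma path_child_descendant x p : path ch x p ->
  {in x :: p &, forall y z, dp y <= dp z -> descendant y z}.
Proof.
have depth_le a q y : path ch a q -> y \in a :: q -> dp a <= dp y.
  by move=> pq; rewrite in_cons => /predU1P [-> // | /(path_child_depth_lt pq) /ltnW].
elim: p x => [|a p IH] x /=.
  by move=> _ y z; rewrite !in_cons !orbF => /eqP -> /eqP ->.
case/andP => cxa pp y z; rewrite in_cons => /predU1P [-> | ya].
  rewrite in_cons => /predU1P [-> // | za] _.
  have daz := IH _ pp _ _ (mem_head _ _) za (depth_le _ _ _ pp za).
  exact: connect_trans (connect1 cxa) daz.
rewrite in_cons => /predU1P [-> | za]; last exact: IH _ pp _ _ ya za.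
by have := depth_le _ _ _ pp ya; rewrite (depth_child cxa); lia.
Qed.

Lemma nth_path_child_depth x p d i : path ch x p -> i <= size p ->
  dp (nth d (x :: p) i) = dp x + i.
Proof.
elim: p x i => [|a p IH] x [|i] //=; rewrite ?addn0 // => /andP [/depth_child da pp].
by rewrite ltnS => /(IH _ _ pp) ->; rewrite da addnS.
Qed.

Definition downward_path (C : {set T}) u := exists p, C = [set:: u :: p] /\ path ch u p.

Section DownwardPath.
Variables (C : {set T}) (u : T).
Hypothesis Cu : downward_path C u.

Lemma downward_path_top : u \in C.
Proof. by case: Cu => p [-> _]; rewrite in_set mem_head. Qed.

Lemma downward_path_ordered : {in C &, forall y z, dp y <= dp z -> descendant y z}.
Proof. by case: Cu => p [-> pp] y z; rewrite !in_set; apply: path_child_descendant. Qed.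

Lemma downward_path_descendant y : y \in C -> descendant u y.
Proof.
move=> yC; apply: (downward_path_ordered downward_path_top yC).
move: yC; case: Cu => p [-> pp]; rewrite in_set.
by rewrite in_cons => /predU1P [-> // | /(path_child_depth_lt pp) /ltnW].
Qed.

Lemma downward_path_depth_inj : {in C &, injective dp}.
Proof.
move=> y z yC zC dyz.
exact: descendant_depth_eq (downward_path_ordered yC zC (eq_leq dyz)) dyz.
Qed.

Lemma downward_path_depths d :
  (exists2 y, y \in C & dp y = d) <-> dp u <= d < dp u + #|C|.
Proof.
case: Cu => p [-> pp]; rewrite cardsE (card_uniqP (path_child_uniq pp)) /=.
split => [[y] | /andP [ud du]].
  rewrite in_set => yp <-; rewrite -(nth_index u yp) nth_path_child_depth //.
    by rewrite leq_addr ltn_add2l index_mem.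
  by rewrite -ltnS -[(size p).+1]/(size (u :: p)) index_mem.
exists (nth u (u :: p) (d - dp u)); first by rewrite in_set mem_nth //= ltnS; lia.
by rewrite nth_path_child_depth //; lia.
Qed.

Lemma downward_path_dist :
  {in C &, forall y z, dist e y z = (dp y - dp z) + (dp z - dp y)}.
Proof.
move=> y z yC zC; have [dyz | /ltnW dzy] := leqP (dp y) (dp z).
  by have := depth_descendant (downward_path_ordered yC zC dyz); lia.
rewrite (dist_sym e_sym e_conn).
by have := depth_descendant (downward_path_ordered zC yC dzy); lia.
Qed.

End DownwardPath.

Lemma root_descendant z : descendant r z.
Proof.
have [n] := ubnP (dp z); elim: n z => // n IH z lt_zn.
have [-> | zr] := eqVneq z r; first exact: connect0.
have [p cpz] := exists_parent zr.
apply: connect_trans (IH p _) (connect1 cpz).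
by rewrite -ltnS -(depth_child cpz).
Qed.

Lemma exists_leaf_descendant z : exists2 l, descendant z l & leaf e r l.
Proof.
have [n] := ubnP (#|T| - dp z); elim: n z => // n IH z lt_zn.
have [lz | /forallPn [y /negPn czy]] := boolP (leaf e r z).
  by exists z => //; exact: connect0.
have lt_yn : #|T| - dp y < n.
  by have := dist_lt e_conn r y; rewrite -/(dp y) (depth_child czy); lia.
have [l dyl ll] := IH y lt_yn.
by exists l => //; exact: connect_trans (connect1 czy) dyl.
Qed.

Lemma root_leaf_path_through a b : descendant a b ->
  exists s, [/\ root_leaf_path e r s, a \in r :: s & b \in r :: s].
Proof.
move=> dab; have /connectP [p1 pp1 l1] := root_descendant a.
have /connectP [p2 pp2 l2] := dab.
have [l /connectP [p3 pp3 l3] ll] := exists_leaf_descendant b.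
exists (p1 ++ p2 ++ p3); split.
- by rewrite /root_leaf_path !cat_path !last_cat -l1 pp1 pp2 -l2 pp3 /= -l3.
- by rewrite -cat_cons mem_cat l1 mem_last.
- by rewrite catA -cat_cons mem_cat l2 l1 -last_cat mem_last.
Qed.

Lemma independent_no_descendant P Q a b :
  independent e r P Q -> a \in P -> b \in Q -> ~~ descendant a b.
Proof.
move=> PQ aP bQ; apply/negP => /root_leaf_path_through [s [rs aS bS]].
by apply: PQ; exists s; split => //; apply/hasP; [exists a | exists b].
Qed.

Lemma downward_path_of_component (V C : {set T}) u :
  induces_downward_paths e r V -> C \in components e V -> starts_at e r C u ->
  downward_path C u.
Proof.
move=> VP CV [uC top_u]; have [x0 [p [Cx0 pp]]] := VP C CV.
have Cx0_path : downward_path C x0 by exists p.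
suff -> : u = x0 by [].
apply: (downward_path_depth_inj Cx0_path) => //; first exact: downward_path_top Cx0_path.
have := top_u x0 (downward_path_top Cx0_path).
have := descendant_depth_le (downward_path_descendant Cx0_path uC); lia.
Qed.

Section IndependentPaths.
Variable K : {set {set T}}.
Hypothesis K_indep : {in K &, forall P Q, P != Q -> independent e r P Q}.

Lemma descendant_same_path P Q a b : P \in K -> Q \in K -> a \in P -> b \in Q ->
  descendant a b -> P = Q.
Proof.
move=> PK QK aP bQ dab; have [// | PQ] := eqVneq P Q.
by case/negP: (independent_no_descendant (K_indep PK QK PQ) aP bQ).
Qed.

Lemma dist_across_paths P Q u u' w w' x y : P \in K -> Q \in K -> P != Q ->
  downward_path P u -> downward_path Q u' -> ch w u -> ch w' u' -> x \in P -> y \in Q ->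
  dist e x y = (dp x - dp u) + (dp y - dp u') + 2 + dist e w w'.
Proof.
move=> PK QK PQ Pu Qu' cwu cw'u' xP yQ.
have dux := downward_path_descendant Pu xP.
have du'y := downward_path_descendant Qu' yQ.
have uP := downward_path_top Pu; have u'Q := downward_path_top Qu'.
have nduy : ~~ descendant u y.
  by apply/negP => duy; rewrite (descendant_same_path PK QK uP yQ duy) eqxx in PQ.
have ndu'w : ~~ descendant u' w.
  apply/negP => du'w; have du'u := connect_trans du'w (connect1 cwu).
  by rewrite (descendant_same_path QK PK u'Q uP du'u) eqxx in PQ.
rewrite (dist_leaving_subtree cwu dux nduy) (dist_sym e_sym e_conn w y).
rewrite (dist_leaving_subtree cw'u' du'y ndu'w) !(dist_sym e_sym e_conn _ u).
rewrite (dist_sym e_sym e_conn y u') (dist_sym e_sym e_conn w' w).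
by have := depth_descendant dux; have := depth_descendant du'y; lia.
Qed.

End IndependentPaths.

Section Homometric.
Variables (V1 V2 : {set T}) (f : {set T} -> {set T}).
Hypotheses (V1_V2_card : #|V1| = #|V2|)
  (V1_paths : induces_downward_paths e r V1) (V2_paths : induces_downward_paths e r V2)
  (f_inj : {in components e V1 &, injective f})
  (f_onto : f @: components e V1 = components e V2)
  (f_sibling : forall C, C \in components e V1 ->
     #|f C| = #|C| /\
     exists u v, [/\ starts_at e r C u, starts_at e r (f C) v & siblings e r u v])
  (paths_indep : forall P Q, P \in components e V1 :|: components e V2 ->
               Q \in components e V1 :|: components e V2 ->
               P != Q -> independent e r P Q).

Local Notation K1 := (components e V1).
Local Notation K2 := (components e V2).

Let in_K1 C : C \in K1 -> C \in K1 :|: K2.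
Proof. by move=> CK; rewrite in_setU CK. Qed.

Let in_K2 C : C \in K2 -> C \in K1 :|: K2.
Proof. by move=> CK; rewrite in_setU CK orbT. Qed.

Lemma f_components C : C \in K1 -> f C \in K2.
Proof. by rewrite -f_onto; apply: imset_f. Qed.

Lemma matched_paths C : C \in K1 -> exists u v w,
  [/\ downward_path C u, downward_path (f C) v, ch w u, ch w v & #|f C| = #|C|].
Proof.
move=> CK; have [card_fC [u [v [Cu fCv [_ [w [cwu cwv]]]]]]] := f_sibling CK.
exists u, v, w; split => //; first exact: downward_path_of_component V1_paths CK Cu.
exact: downward_path_of_component V2_paths (f_components CK) fCv.
Qed.

Definition mate x := odflt x [pick y in f (Defs.comp e V1 x) | dp y == dp x].

Lemma mateP x : x \in V1 -> mate x \in f (Defs.comp e V1 x) /\ dp (mate x) = dp x.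
Proof.
move=> xV; have [u [v [w [Cu fCv cwu cwv card_fC]]]] := matched_paths (imset_f _ xV).
rewrite /mate; case: pickP => [y /andP [yf /eqP dy] | none] //=.
have [y yf dy] : exists2 y, y \in f (Defs.comp e V1 x) & dp y = dp x.
  apply/(downward_path_depths fCv).
  rewrite card_fC (depth_child cwv) -(depth_child cwu).
  by apply/(downward_path_depths Cu); exists x => //; apply: mem_comp.
by have := none y; rewrite yf dy eqxx.
Qed.

Lemma mate_V2 x : x \in V1 -> mate x \in V2.
Proof.
move=> xV; have [xf _] := mateP xV.
exact: subsetP (components_sub (f_components (imset_f _ xV))) _ xf.
Qed.

Lemma mate_inj : {in V1 &, injective mate}.
Proof.
move=> x y xV yV eq_mate.
have [xf dx] := mateP xV; have [yf dy] := mateP yV.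
have CxK : Defs.comp e V1 x \in K1 := imset_f _ xV.
have CyK : Defs.comp e V1 y \in K1 := imset_f _ yV.
have eq_fC : f (Defs.comp e V1 x) = f (Defs.comp e V1 y).
  rewrite eq_mate in xf; apply: (descendant_same_path paths_indep) xf yf (connect0 _ _).
    exact: in_K2 (f_components CxK).
  exact: in_K2 (f_components CyK).
have [u [_ [_ [Cu _ _ _ _]]]] := matched_paths CxK.
apply: (downward_path_depth_inj Cu); first exact: mem_comp.
  by rewrite (f_inj CxK CyK eq_fC); apply: mem_comp.
by rewrite -dx eq_mate dy.
Qed.

Lemma mate_dist : {in V1 &, forall x y, dist e (mate x) (mate y) = dist e x y}.
Proof.
move=> x y xV yV.
have [xf dx] := mateP xV; have [yf dy] := mateP yV.
have CxK : Defs.comp e V1 x \in K1 := imset_f _ xV.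
have CyK : Defs.comp e V1 y \in K1 := imset_f _ yV.
have [u [v [w [Cu fCv cwu cwv _]]]] := matched_paths CxK.
have [u' [v' [w' [Cu' fCv' cwu' cwv' _]]]] := matched_paths CyK.
have [eq_C | ne_C] := eqVneq (Defs.comp e V1 x) (Defs.comp e V1 y).
  have yCx : y \in Defs.comp e V1 x by rewrite eq_C mem_comp.
  rewrite -eq_C in yf.
  rewrite (downward_path_dist fCv xf yf) dx dy.
  by rewrite (downward_path_dist Cu (mem_comp e V1 x) yCx).
have ne_fC : f (Defs.comp e V1 x) != f (Defs.comp e V1 y).
  by apply: contra ne_C => /eqP /(f_inj CxK CyK) ->.
rewrite (dist_across_paths paths_indep (in_K1 CxK) (in_K1 CyK) ne_C Cu Cu' cwu cwu'
  (mem_comp e V1 x) (mem_comp e V1 y)).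
rewrite (dist_across_paths paths_indep (in_K2 (f_components CxK)) (in_K2 (f_components CyK))
  ne_fC fCv fCv' cwv cwv' xf yf).
by rewrite dx dy (depth_child cwu) (depth_child cwv) (depth_child cwu') (depth_child cwv').
Qed.

Lemma mate_image : mate @: V1 = V2.
Proof.
apply/eqP; rewrite eqEcard card_in_imset ?V1_V2_card ?leqnn ?andbT; last exact: mate_inj.
by apply/subsetP => _ /imsetP [x xV ->]; apply: mate_V2.
Qed.

Lemma profile_mate d : profile e V1 d = profile e V2 d.
Proof. exact: (profile_isometry mate_inj mate_image mate_dist d). Qed.

End Homometric.

End Tree.

Theorem mainTheorem3 (T : finType) (e : rel T) (r : T) (V1 V2 : {set T})
  (f : {set T} -> {set T}) :
  is_tree e ->
  [disjoint V1 & V2] ->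
  #|V1| = #|V2| ->
  induces_downward_paths e r V1 ->
  induces_downward_paths e r V2 ->
  {in components e V1 &, injective f} ->
  f @: components e V1 = components e V2 ->
  (forall C, C \in components e V1 ->
     #|f C| = #|C| /\
     exists u v, [/\ starts_at e r C u, starts_at e r (f C) v & siblings e r u v]) ->
  (forall P Q, P \in components e V1 :|: components e V2 ->
               Q \in components e V1 :|: components e V2 ->
               P != Q -> independent e r P Q) ->
  homometric e V1 V2.
Proof.
move=> tree disj card V1_paths V2_paths f_inj f_onto f_sibling paths_indep.
split=> // d.
exact: (profile_mate tree card V1_paths V2_paths f_inj f_onto f_sibling paths_indep).
Qed.
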